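(* Consider robust dynamic pricing with horizon $T$, valuation $v^\star\in[0,1)$, and feedback corrupted in at most $C$ rounds, and run the meta-algorithm described in the context with an arbitrary commitment subroutine. Then the number of commit failures on incorrect leaves satisfies \[ N_{\textsc{F}} \le \lceil\log_2 T\rceil + C + N_{\textsc{T}}, \] and the regret satisfies \[ R_T \le \sum_{\ell\in\mathcal L} R(\ell) + 3\lceil\log_2 T\rceil + 6C + 3N_{\textsc{T}}. \]
   Context: Robust dynamic pricing: there are $T$ rounds and an unknown valuation $v^\star\in[0,1)$. At each round $t$ the seller posts a price $p_t\in[0,1]$ (chosen, possibly at random, based on past observations). The true sale indicator is $y_t=\mathbbm 1\{p_t\le v^\star\}$; the seller observes $\sigma_t\in\{0,1\}$, and round $t$ is corrupted if $\sigma_t\ne y_t$. At most $C$ rounds are corrupted: $|\{t\in[T]:\sigma_t\neq y_t\}|\le C$. The adversary decides whether to corrupt round $t$ based on the history and on the seller's distribution over $p_t$, but not on the realized $p_t$ (how it corrupts may depend on the realized price). Revenue is $r_t=p_t\,\mathbbm 1\{p_t\le v^\star\}$ and regret is $R_T=T v^\star-\sum_{t=1}^T r_t$. Meta-algorithm: let $D=\lceil\log_2 T\rceil$. Consider the complete binary tree of intervals of depth $D$ whose root is $[0,1)$ and in which each non-leaf node $[L,R)$ has children $[L,M)$ and $[M,R)$ with $M=(L+R)/2$; the nodes at depth $D$ are the leaves, forming the set $\mathcal L$ (each of length at most $1/T$), and $\ell^\star$ denotes the unique leaf containing $v^\star$. The algorithm keeps a current node $I$, initially the root, and repeats until the horizon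 ends: if $I=[L,R)$ is not a leaf, it performs a safety check — post $L$ and observe $\sigma_L$, then post $R$ and observe $\sigma_R$; the check fails if $\sigma_L=0$ or $\sigma_R=1$ (by convention, the query at $L=0$ and the query at $R=1$ always count as passing). If the check fails, $I$ is replaced by its parent; otherwise the algorithm posts $M=(L+R)/2$, observes $\sigma_M$, and replaces $I$ by $[M,R)$ if $\sigma_M=1$ and by $[L,M)$ if $\sigma_M=0$. If $I$ is a leaf, the algorithm calls a commitment subroutine on $I$, which posts prices on consecutive rounds and either continues until the horizon ends or returns FAIL, in which case $I$ is replaced by its parent. For a leaf $\ell$, $Q(\ell)$ is the set of rounds during which the commitment subroutine runs on $\ell$, and $R(\ell)=\sum_{t\in Q(\ell)}(v^\star-p_t\mathbbm 1\{p_t\le v^\star\})$. $N_{\textsc{T}}$ is the number of times the commitment subroutine returns FAIL on $\ell^\star$, and $N_{\textsc{F}}$ is the number of times it returns FAIL on a leaf different from $\ell^\star$. *)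

From HB Require Import structures.
From mathcomp Require Import all_boot all_order all_algebra.
From mathcomp Require Import reals.
Set Implicit Arguments. Unset Strict Implicit. Unset Printing Implicit Defensive.
Import Order.TTheory GRing.Theory Num.Theory.
Local Open Scope ring_scope.

(* A node of the dyadic tree: (depth d, index k), the interval
   [k/2^d, (k+1)/2^d).  The root is (0,0).  *)
Definition node := (nat * nat)%type.

Section Pricing.
Variable R : realType.

(* history: sequence of (posted price, observed feedback sigma) *)
Definition hist := seq (R * bool).

Definition nodeL (n : node) : R := n.2%:R / 2%:R ^+ n.1.
Definition nodeR (n : node) : R := n.2.+1%:R / 2%:R ^+ n.1.
Definition nodeM (n : node) : R := (n.2.*2.+1)%:R / 2%:R ^+ n.1.+1.
(* parent; convention: the parent of the root is the root (only relevant
   when the tree has depth 0, i.e. T = 1) *)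
Definition parent (n : node) : node := (n.1.-1, n.2./2).
Definition lchild (n : node) : node := (n.1.+1, n.2.*2).
Definition rchild (n : node) : node := (n.1.+1, n.2.*2.+1).
Definition in_node (v : R) (n : node) : bool := (nodeL n <= v) && (v < nodeR n).

(* phase of the meta-algorithm within the current node:
   PhL   : about to post L (safety check, first query)
   PhR b : about to post R; b = whether the query at L passed
   PhM   : check passed, about to post M
   PhC loc : commitment subroutine running, loc = history of this call *)
Inductive phase := PhL | PhR of bool | PhM | PhC of hist.
Definition state := (node * phase)%type.

(* one round of the run: posted price, observed feedback, the leaf on which
   the commitment subroutine posted this price (if any), and the leaf on
   which the commitment subroutine returned FAIL at the start of this round
   (if any). *)
Record rec := Rec { rprice : R; rsig : bool; rcommit : option node;
                    rfail : option node }.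

Variables (D : nat)
  (* commitment subroutine: price posted given leaf, global history and the
     history of the current call *)
  (cprice : node -> hist -> hist -> R)
  (* commitment subroutine: whether to return FAIL (consulted before each
     round of a call except its first) *)
  (cstop : node -> hist -> hist -> bool)
  (* adversary: observed feedback given the history and the posted price *)
  (adv : hist -> R -> bool).

Definition enter (n : node) : state :=
  if n.1 == D then (n, PhC [::]) else (n, PhL).

Definition resolve (s : state) (h : hist) : state * option node :=
  let: (n, ph) := s in
  match ph with
  | PhC loc => if (loc != [::]) && cstop n h loc
               then (enter (parent n), Some n) else (s, None)
  | _ => (s, None)
  end.

Definition post (s : state) (h : hist) : R * option node :=
  let: (n, ph) := s in
  match ph with
  | PhL => (nodeL n, None)
  | PhR _ => (nodeR n, None)
  | PhM => (nodeM n, None)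
  | PhC loc => (cprice n h loc, Some n)
  end.

Definition next (s : state) (p : R) (sg : bool) : state :=
  let: (n, ph) := s in
  match ph with
  | PhL => (n, PhR ((nodeL n == 0) || sg))
  | PhR bL => if bL && ((nodeR n == 1) || ~~ sg) then (n, PhM)
              else enter (parent n)
  | PhM => enter (if sg then rchild n else lchild n)
  | PhC loc => (n, PhC (rcons loc (p, sg)))
  end.

Fixpoint run (k : nat) (s : state) (h : hist) : seq rec :=
  match k with
  | 0 => [::]
  | k'.+1 =>
    let: (s1, f) := resolve s h in
    let: (p, c) := post s1 h in
    let sg := adv h p in
    Rec p sg c f :: run k' (next s1 p sg) (rcons h (p, sg))
  end.

Definition trace (T : nat) : seq rec := run T (enter (0, 0)%N) [::].

End Pricing.

Section Quantities.
Variable R : realType.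
Implicit Types (v : R) (tr : seq (rec R)).

Definition revenue v (r : rec R) : R := if rprice r <= v then rprice r else 0.

Definition corruptions v tr : nat :=
  count (fun r => rsig r != (rprice r <= v)) tr.

Definition regret (T : nat) v tr : R :=
  T%:R * v - \sum_(r <- tr) revenue v r.

Definition leafRegret (D k : nat) v tr : R :=
  \sum_(r <- tr | rcommit r == Some (D, k)) (v - revenue v r).

Definition NT v tr : nat :=
  count (fun r => if rfail r is Some n then in_node v n else false) tr.
Definition NF v tr : nat :=
  count (fun r => if rfail r is Some n then ~~ in_node v n else false) tr.
End Quantities.

From Pilot Require Import Defs.
From HB Require Import structures.
From mathcomp Require Import all_boot all_order all_algebra.
From mathcomp Require Import reals zify lra.
Set Implicit Arguments. Unset Strict Implicit. Unset Printing Implicit Defensive.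
Import Order.TTheory GRing.Theory Num.Theory.
Local Open Scope ring_scope.

(* The argument is amortized over the tree distance from the current node to
   the leaf l* containing v: up to their lowest common ancestor, then down to
   depth D. It starts at D. An uncorrupted check-and-descend cycle at a node
   containing v moves one step towards l*, a cycle at a node missing v moves
   one step back towards l* unless a corrupted answer fooled it, and a FAIL
   moves to the parent, i.e. one step closer to l* if the leaf was wrong and
   one step away if it was l*. Hence the distance plus the number of wrong
   FAILs grows only with corruptions and true FAILs, which gives
   N_F <= D + C + N_T. A cycle lasts at most three rounds, so three times the
   distance, plus six while a corrupted answer misleads the current check,
   bounds the number of rounds spent outside the commitments on leaves by
   3D + 6C + 3N_T; each such round loses at most v < 1. *)

Lemma sum_count (T : Type) (p : pred T) (s : seq T) :
  (\sum_(x <- s) p x)%N = count p s.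
Proof. by rewrite -sum1_count [RHS]big_mkcond. Qed.

Section Run.
Variables (R : realType) (D : nat) (cprice : node -> hist R -> hist R -> R)
  (cstop : node -> hist R -> hist R -> bool) (adv : hist R -> R -> bool).

Definition round (s : state R) (h : hist R) : rec R * state R :=
  let: (s1, f) := resolve D cstop s h in
  let: (p, c) := post cprice s1 h in
  let sg := adv h p in
  (Rec p sg c f, Defs.next D s1 p sg).

Local Notation run := (run D cprice cstop adv).

Lemma run_round k s h : run k.+1 s h =
  (round s h).1 ::
    run k (round s h).2 (rcons h (rprice (round s h).1, rsig (round s h).1)).
Proof. by rewrite /= /round; case: resolve => s1 f; case: post. Qed.

Lemma size_run k s h : size (run k s h) = k.
Proof. by elim: k s h => [|k IH] s h //; rewrite run_round /= IH. Qed.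

Lemma all_run (p : pred (rec R)) : (forall s h, p (round s h).1) ->
  forall k s h, all p (run k s h).
Proof. by move=> pr; elim=> [|k IH] s h //; rewrite run_round /= pr IH. Qed.

Lemma run_potential (inv : pred (state R)) (pot : state R -> nat)
    (a b : rec R -> nat) :
  (forall s h, inv s -> inv (round s h).2 /\
     (a (round s h).1 + pot (round s h).2 <= pot s + b (round s h).1)%N) ->
  forall k s h, inv s ->
    (\sum_(r <- run k s h) a r <= pot s + \sum_(r <- run k s h) b r)%N.
Proof.
move=> step; elim=> [|k IH] s h inv_s; first by rewrite !big_nil.
have [inv_s' drop] := step s h inv_s.
have := IH _ (rcons h (rprice (round s h).1, rsig (round s h).1)) inv_s'.
by rewrite run_round !big_cons; lia.
Qed.

End Run.

Section Analysis.
Variables (R : realType) (v : R) (D : nat).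
Hypotheses (v_ge0 : 0 <= v) (v_lt1 : v < 1).
Variables (cprice : node -> hist R -> hist R -> R)
  (cstop : node -> hist R -> hist R -> bool) (adv : hist R -> R -> bool).

Lemma in_nodeE d k : in_node v (d, k) = (k%:R <= v * 2 ^+ d < k.+1%:R).
Proof.
by rewrite /in_node /nodeL /nodeR /= ler_pdivrMr ?ltr_pdivlMr ?exprn_gt0.
Qed.

Lemma in_node_root : in_node v (0, 0)%N.
Proof. by rewrite in_nodeE expr0 mulr1 v_ge0. Qed.

Lemma in_node_parent n : in_node v n -> in_node v (parent n).
Proof.
case: n => [[|d] k]; rewrite /parent !in_nodeE /=.
  rewrite expr0 mulr1 => /andP[kv _].
  have : (k < 1)%N by rewrite -(ltr_nat R) (le_lt_trans kv v_lt1).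
  by case: k {kv} => // _; rewrite v_ge0.
rewrite exprS mulrCA; set x := v * _.
have k_split : k%:R = 2 * (k./2)%:R + (odd k)%:R :> R.
  by rewrite -[k in LHS]odd_double_half addnC natrD -muln2 natrM mulrC.
have odd_ge0 : 0 <= (odd k)%:R :> R by [].
have odd_le1 : (odd k)%:R <= 1 :> R by case: (odd k).
rewrite -(natr1 k) -(natr1 k./2) k_split => /andP[lo hi].
by apply/andP; split; lra.
Qed.

Lemma in_node_child n : in_node v n ->
  in_node v (if nodeM R n <= v then rchild n else lchild n).
Proof.
case: n => d k; rewrite /nodeM /= ler_pdivrMr ?exprn_gt0 // in_nodeE.
have x2 : v * 2 ^+ d.+1 = 2 * (v * 2 ^+ d) by rewrite exprS mulrCA.
have dbl1 : k.*2.+1%:R = 2 * k%:R + 1 :> R by rewrite -natr1 -muln2 natrM mulrC.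
rewrite x2 dbl1 -(natr1 k); set x := v * _ => /andP[lo hi].
case: ifP; rewrite /rchild /lchild in_nodeE /= x2 -/x.
  by rewrite -(natr1 k.*2.+1) dbl1 => M; apply/andP; split; lra.
rewrite -(natr1 k.*2) -muln2 natrM mulrC => /negbT; rewrite -ltNge => M.
by apply/andP; split; lra.
Qed.

Lemma check_passE n b sg : b = (nodeL R n <= v) -> sg = (nodeR R n <= v) ->
  b && ((nodeR R n == 1) || ~~ sg) = in_node v n.
Proof.
move=> -> ->; rewrite /in_node ltNge.
case: (leP (nodeR R n) v) => Rv; last by rewrite orbT.
have /negbTE-> : nodeR R n != 1 by apply: contraTneq Rv => ->; rewrite -ltNge.
by rewrite andbF.
Qed.

Fixpoint lca_depth (d k : nat) : nat :=
  if in_node v (d, k) then d else if d is d'.+1 then lca_depth d' k./2 else 0.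

Definition target_dist (n : node) : nat := (D + n.1 - 2 * lca_depth n.1 n.2)%N.

Lemma lca_depth_le d k : (lca_depth d k <= d)%N.
Proof.
elim: d k => [|d IH] k /=; case: ifP => // _.
exact: leq_trans (IH _) (leqnSn _).
Qed.

Lemma lca_depth_in d k : in_node v (d, k) -> lca_depth d k = d.
Proof. by case: d => [|d] /= ->. Qed.

Lemma target_dist_ge n : (D - n.1 <= target_dist n)%N.
Proof. by rewrite /target_dist; have := lca_depth_le n.1 n.2; lia. Qed.

Lemma target_dist_in n : in_node v n -> target_dist n = (D - n.1)%N.
Proof. by case: n => d k vn; rewrite /target_dist (lca_depth_in vn) /=; lia. Qed.

Lemma target_dist_parent_in n : in_node v n ->
  (target_dist (parent n) <= (target_dist n).+1)%N.
Proof.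
move=> vn; rewrite !target_dist_in ?in_node_parent //.
by case: n {vn} => [[|d] k] /=; lia.
Qed.

Lemma target_dist_child_in n : (0 < n.1 <= D)%N -> in_node v n ->
  (target_dist n).+1 = target_dist (parent n).
Proof.
move=> dD vn; rewrite !target_dist_in ?in_node_parent //.
by case: n dD {vn} => [[|d] k] /=; lia.
Qed.

Lemma target_dist_parent_out n : (0 < n.1 <= D)%N -> ~~ in_node v n ->
  (target_dist (parent n)).+1 = target_dist n.
Proof.
case: n => [[|d] k] //= dD /negbTE out.
by have := lca_depth_le d k./2; rewrite /target_dist /= out; lia.
Qed.

Definition valid_node (n : node) : bool := (n.1 <= D)%N && (n.2 < 2 ^ n.1)%N.

Definition wf_state (s : state R) : bool :=
  valid_node s.1 && if s.2 is PhC _ then s.1.1 == D else (s.1.1 < D)%N.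

Definition misled (s : state R) : bool :=
  match s.2 with
  | PhR b => b != (nodeL R s.1 <= v)
  | PhM => ~~ in_node v s.1
  | _ => false
  end.

Definition elapsed (s : state R) : nat :=
  match s.2 with PhR _ => 1 | PhM => 2 | _ => 0 end.

Definition fail_potential (s : state R) : nat := (target_dist s.1 + misled s)%N.

Definition search_potential (s : state R) : nat :=
  (3 * target_dist s.1 + 6 * misled s - elapsed s)%N.

Definition corrupted (p : R) (sg : bool) : bool := sg != (p <= v).

Definition amortized (s s' : state R) (searching corrupt : bool) : Prop :=
  (fail_potential s' <= fail_potential s + corrupt)%N /\
  (searching + search_potential s' <= search_potential s + 6 * corrupt)%N.

Lemma valid_parent n : valid_node n -> valid_node (parent n).
Proof.
case: n => [[|d] k]; rewrite /valid_node /parent /=; first by case: k.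
by rewrite expnS -[k in (k < _)%N]odd_double_half; case: (odd k); lia.
Qed.

Lemma valid_out_depth n : valid_node n -> ~~ in_node v n -> (0 < n.1 <= D)%N.
Proof.
case: n => [[|d] k] /andP[/= dD]; last by rewrite dD.
by case: k => // _; rewrite in_node_root.
Qed.

Lemma valid_child n (b : bool) : valid_node n -> (n.1 < D)%N ->
  valid_node (if b then rchild n else lchild n).
Proof.
by case: n => d k /andP[/= _ kd] dD; case: b; rewrite /valid_node /= expnS; lia.
Qed.

Lemma wf_enter c : valid_node c -> wf_state (enter R D c).
Proof.
rewrite /enter /wf_state; case: eqP => [cD|cD] /[dup] /andP[c_le _] /= ->.
  by rewrite cD eqxx.
by rewrite ltn_neqAle c_le andbT; apply/eqP.
Qed.

Lemma fail_potential_enter c : fail_potential (enter R D c) = target_dist c.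
Proof. by rewrite /enter /fail_potential; case: eqP => _; rewrite addn0. Qed.

Lemma search_potential_enter c :
  search_potential (enter R D c) = (3 * target_dist c)%N.
Proof.
by rewrite /enter /search_potential; case: eqP => _; rewrite muln0 addn0 subn0.
Qed.

Lemma checkL_amortized n sg : (n.1 < D)%N ->
  amortized (n, PhL R) (n, PhR R ((nodeL R n == 0) || sg))
    true (corrupted (nodeL R n) sg).
Proof.
move=> dD; have := target_dist_ge n.
have : ((nodeL R n == 0) || sg) != (nodeL R n <= v) -> corrupted (nodeL R n) sg.
  by rewrite /corrupted; case: (nodeL R n =P 0) => [->|_] //=; rewrite v_ge0.
rewrite /amortized /fail_potential /search_potential /misled /elapsed /=; lia.
Qed.

Lemma checkR_amortized n b sg : valid_node n -> (n.1 < D)%N ->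
  amortized (n, PhR R b) (Defs.next D (n, PhR R b) (nodeR R n) sg)
    true (corrupted (nodeR R n) sg).
Proof.
move=> n_ok dD; have := target_dist_ge n; rewrite /=.
set pass := b && _.
have fooled : pass != in_node v n ->
    (b != (nodeL R n <= v)) || corrupted (nodeR R n) sg.
  apply: contraR; rewrite negb_or !negbK => /andP[/eqP b_ok /eqP sg_ok].
  by rewrite /pass check_passE.
rewrite /amortized; case: pass fooled => /= fooled.
  by rewrite /fail_potential /search_potential /misled /elapsed /=; lia.
rewrite fail_potential_enter search_potential_enter.
rewrite /fail_potential /search_potential /misled /elapsed /=.
case vn: (in_node v n) fooled => /= fooled.
  by have := target_dist_parent_in vn; lia.
by have := target_dist_parent_out (valid_out_depth n_ok (negbT vn)) (negbT vn); lia.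
Qed.

Lemma descend_amortized n sg : valid_node n -> (n.1 < D)%N ->
  amortized (n, PhM R) (Defs.next D (n, PhM R) (nodeM R n) sg)
    true (corrupted (nodeM R n) sg).
Proof.
move=> n_ok dD; rewrite /= /amortized fail_potential_enter search_potential_enter.
set c := if sg then rchild n else lchild n.
have c_parent : parent c = n.
  by case: n {n_ok dD} @c => d k; case: sg; rewrite /parent /= ?uphalf_double ?doubleK.
have c_depth : (0 < c.1 <= D)%N by rewrite /c; case: ifP.
have c_in : in_node v n -> ~~ corrupted (nodeM R n) sg -> in_node v c.
  by move=> vn; rewrite /corrupted negbK => /eqP sgE; rewrite /c sgE in_node_child.
have c_out : ~~ in_node v n -> ~~ in_node v c.
  by apply: contra => /in_node_parent; rewrite c_parent.
have := target_dist_ge n.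
rewrite /fail_potential /search_potential /misled /elapsed /=.
case vc: (in_node v c) c_in c_out => c_in c_out.
  by have := target_dist_child_in c_depth vc; rewrite c_parent; lia.
by have := target_dist_parent_out c_depth (negbT vc); rewrite c_parent; lia.
Qed.

Definition fail_off_target (f : option node) : bool :=
  if f is Some n then ~~ in_node v n else false.

Definition fail_on_target (f : option node) : bool :=
  if f is Some n then in_node v n else false.

Definition commits_on_leaf (c : option node) : bool :=
  if c is Some n then (n.1 == D) && (n.2 < 2 ^ D)%N else false.

Lemma play_step s h sg : wf_state s ->
  let: (p, c) := post cprice s h in
  wf_state (Defs.next D s p sg) /\
  amortized s (Defs.next D s p sg) (~~ commits_on_leaf c) (corrupted p sg).
Proof.
case: s => n [|b| |loc] /andP[n_ok dD] /=.
- by split; [rewrite /wf_state /= n_ok | exact: checkL_amortized].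
- split; last exact: checkR_amortized.
  by case: ifP => _; [rewrite /wf_state /= n_ok | apply/wf_enter/valid_parent].
- by split; [apply/wf_enter/valid_child | exact: descend_amortized].
- move: n_ok dD => /[dup] n_ok /andP[_ kD] /eqP dD.
  split; first by rewrite /wf_state /= n_ok dD eqxx.
  rewrite /amortized /fail_potential /search_potential /elapsed /= dD eqxx -dD kD.
  lia.
Qed.

Lemma resolve_step s h : wf_state s ->
  let: (s1, f) := resolve D cstop s h in
  [/\ wf_state s1,
      (fail_off_target f + fail_potential s1 <=
         fail_potential s + fail_on_target f)%N
    & (search_potential s1 <= search_potential s + 3 * fail_on_target f)%N].
Proof.
case: s => n [|b| |loc] wf_s /=; try by split => //=; lia.
case: ifP => _; last by split => //=; lia.
move: wf_s => /andP[/= n_ok /eqP nD].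
have wf1 : wf_state (enter R D (parent n)) by exact/wf_enter/valid_parent.
rewrite fail_potential_enter search_potential_enter.
rewrite /fail_potential /search_potential /elapsed /=.
case vn: (in_node v n) => /=.
  by have := target_dist_parent_in vn; split => //; lia.
have := target_dist_parent_out (valid_out_depth n_ok (negbT vn)) (negbT vn).
by split => //; lia.
Qed.

Lemma round_step s h : wf_state s ->
  let r := (round D cprice cstop adv s h).1 in
  let s' := (round D cprice cstop adv s h).2 in
  [/\ wf_state s',
      (fail_off_target (rfail r) + fail_potential s' <=
         fail_potential s + corrupted (rprice r) (rsig r) + fail_on_target (rfail r))%N
    & (~~ commits_on_leaf (rcommit r) + search_potential s' <=
         search_potential s + 6 * corrupted (rprice r) (rsig r)
         + 3 * fail_on_target (rfail r))%N].
Proof.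
rewrite /round => wf_s.
have := resolve_step h wf_s; case: resolve => s1 f [wf1 fail1 search1].
have := play_step h (adv h (post cprice s1 h).1) wf1.
by case: post => p c /= [wf' [fail2 search2]]; split => //; lia.
Qed.

Local Notation run := (run D cprice cstop adv).

Lemma NF_run_le k s h : wf_state s ->
  (NF v (run k s h) <=
     fail_potential s + corruptions v (run k s h) + NT v (run k s h))%N.
Proof.
move=> wf_s; rewrite /NF /NT /corruptions -!sum_count -addnA -big_split /=.
apply: (run_potential (pot := fail_potential) _ k h wf_s).
by move=> s1 h1 /(round_step h1) [wf1 drop _]; rewrite addnA.
Qed.

Lemma search_rounds_run_le k s h : wf_state s ->
  (count (fun r => ~~ commits_on_leaf (rcommit r)) (run k s h) <=
     search_potential s + 6 * corruptions v (run k s h) + 3 * NT v (run k s h))%N.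
Proof.
move=> wf_s; rewrite /NT /corruptions -!sum_count !big_distrr -addnA -big_split /=.
apply: (run_potential (pot := search_potential) _ k h wf_s).
by move=> s1 h1 /(round_step h1) [wf1 _ drop]; rewrite addnA.
Qed.

Hypothesis cprice_ge0 : forall n h loc, 0 <= cprice n h loc.

Lemma post_price_ge0 s h : 0 <= (post cprice s h).1.
Proof.
by case: s => n [|b| |loc] //=; rewrite /nodeL /nodeR /nodeM divr_ge0 ?exprn_ge0.
Qed.

Lemma run_prices_ge0 k s h : all (fun r => 0 <= rprice r) (run k s h).
Proof.
apply: all_run => s' h'; rewrite /round; case: resolve => s1 f.
by have := post_price_ge0 s1 h'; case: post.
Qed.

Lemma loss_le1 r : 0 <= rprice r -> v - revenue v r <= 1.
Proof. by rewrite /revenue => p_ge0; have := v_lt1; case: ifP => _; lra. Qed.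

Lemma regret_sum T tr : size tr = T ->
  regret T v tr = \sum_(r <- tr) (v - revenue v r).
Proof.
by move=> <-; rewrite /regret sumrB big_const_seq count_predT iter_addr_0 mulr_natl.
Qed.

Lemma leafRegret_sum tr : \sum_(k < 2 ^ D) leafRegret D k v tr =
  \sum_(r <- tr | commits_on_leaf (rcommit r)) (v - revenue v r).
Proof.
under eq_bigr => k _ do rewrite /leafRegret big_mkcond.
rewrite exchange_big [RHS]big_mkcond; apply: eq_bigr => r _.
case: (rcommit r) => [[d j]|] /=; last by rewrite big1.
have [/andP[/eqP -> j_lt]|not_leaf] := boolP ((d == D) && (j < 2 ^ D)%N).
  rewrite (bigD1 (Ordinal j_lt)) //= eqxx big1 ?addr0 // => k k_ne.
  case: eqP => // -[jk]; move: k_ne; suff -> : k = Ordinal j_lt by rewrite eqxx.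
  exact: val_inj.
rewrite big1 // => k _; case: eqP => // -[dD jk].
by move: not_leaf; rewrite dD jk eqxx ltn_ord.
Qed.

Local Notation trace T := (trace D cprice cstop adv T).

Lemma wf_root : wf_state (enter R D (0, 0)%N).
Proof. exact: wf_enter. Qed.

Lemma target_dist_root : target_dist (0, 0)%N = D.
Proof. by rewrite target_dist_in ?in_node_root ?subn0. Qed.

Lemma trace_NF_le T :
  (NF v (trace T) <= D + corruptions v (trace T) + NT v (trace T))%N.
Proof.
by have := NF_run_le T [::] wf_root; rewrite fail_potential_enter target_dist_root.
Qed.

Lemma trace_search_rounds_le T :
  (count (fun r => ~~ commits_on_leaf (rcommit r)) (trace T) <=
     3 * D + 6 * corruptions v (trace T) + 3 * NT v (trace T))%N.
Proof.
have := search_rounds_run_le T [::] wf_root.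
by rewrite search_potential_enter target_dist_root.
Qed.

Lemma trace_regret_le T :
  regret T v (trace T) <= \sum_(k < 2 ^ D) leafRegret D k v (trace T)
    + (count (fun r => ~~ commits_on_leaf (rcommit r)) (trace T))%:R.
Proof.
rewrite regret_sum ?size_run // leafRegret_sum.
rewrite (bigID (fun r => commits_on_leaf (rcommit r))) /= lerD2l.
rewrite -sum1_count natr_sum.
have /all_filterP <- : all (fun r => 0 <= rprice r) (trace T) by exact: run_prices_ge0.
rewrite !big_filter_cond; apply: ler_sum => r /andP[p_ge0 _].
exact: loss_le1.
Qed.

End Analysis.

Unset Implicit Arguments.
Theorem theorem3p4 (R : realType) (T C : nat) (v : R)
    (cprice : node -> hist R -> hist R -> R)
    (cstop : node -> hist R -> hist R -> bool)
    (adv : hist R -> R -> bool) :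
  (0 < T)%N -> 0 <= v < 1 ->
  (forall n h loc, 0 <= cprice n h loc <= 1) ->
  let D := up_log 2 T in
  let tr := trace D cprice cstop adv T in
  (corruptions v tr <= C)%N ->
  (NF v tr <= D + C + NT v tr)%N /\
  regret T v tr <= \sum_(k < 2 ^ D) leafRegret D k v tr
                   + 3 * D%:R + 6 * C%:R + 3 * (NT v tr)%:R.
Proof.
move=> _ /andP[v_ge0 v_lt1] cprice_01 D tr tr_C.
have cprice_ge0 n h loc : 0 <= cprice n h loc by case/andP: (cprice_01 n h loc).
have NF_le := trace_NF_le D v_ge0 v_lt1 cprice cstop adv T.
have search_le := trace_search_rounds_le D v_ge0 v_lt1 cprice cstop adv T.
split; first by rewrite -/tr in NF_le *; lia.
apply: le_trans (trace_regret_le D v_lt1 cstop adv cprice_ge0 T) _.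
rewrite -!addrA lerD2l -!natrM -!natrD ler_nat.
by rewrite -/tr in search_le *; lia.
Qed.
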